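(* Let $k\ge 2$ be a fixed integer. For $n\ge 1$, let $X_n$ be the random variable counting the number of occurrences of the pattern $12\cdots k$ in a permutation $p=p_1p_2\cdots p_n$ chosen uniformly at random among all $n!$ permutations of length $n$, i.e. the number of index sets $1\le i_1<i_2<\cdots<i_k\le n$ with $p_{i_1}<p_{i_2}<\cdots<p_{i_k}$. Then there exists a constant $c>0$ (depending only on $k$) such that for all $n\ge k$, \[\operatorname{Var}(X_n)\ge c\, n^{2k-1}.\]
   Context: A permutation of length $n$ is chosen uniformly at random, each with probability $1/n!$. *)

From HB Require Import structures.
From mathcomp Require Import all_boot all_order all_algebra all_fingroup.
Set Implicit Arguments. Unset Strict Implicit. Unset Printing Implicit Defensive.
Import Order.TTheory GRing.Theory Num.Theory.

Definition occ (k n : nat) (p : 'S_n) : nat :=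
  #|[set A : {set 'I_n} | (#|A| == k) &&
     [forall i in A, forall j in A, (i < j)%N ==> (p i < p j)%N]]|.

Definition Eunif (n : nat) (f : 'S_n -> rat) : rat :=
  ((\sum_(p : 'S_n) f p) / (n`!)%:R)%R.

Definition Xn (k n : nat) (p : 'S_n) : rat := ((occ k p)%:R)%R.

Definition VarX (k n : nat) : rat :=
  Eunif (fun p : 'S_n => (Xn k p - Eunif (Xn k (n:=n))) ^+ 2)%R.

From HB Require Import structures.
From mathcomp Require Import all_boot all_order all_algebra all_fingroup.
Import Order.TTheory GRing.Theory Num.Theory.
From mathcomp Require Import zify ring lra.
Set Implicit Arguments. Unset Strict Implicit. Unset Printing Implicit Defensive.

(* Let m = n/2 and Y(p) = sum_{i<m} e_i(p), where e_i(p) is +1 or -1 according as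
   p(i) < p(i+m) or not. Composing with the transposition (i, i+m) flips e_i and
   fixes every e_j, j <> i, so the e_i are centred and pairwise uncorrelated:
   E Y = 0 and E Y^2 = m. Cauchy-Schwarz then gives Var X >= Cov(X, Y)^2 / m. Fix a k-set A and a position u outside A;
   among the permutations increasing on A, the rank of p(u) within p(A) is uniform
   on {0, ..., k}, because transposing u with the element of A of rank z swaps the
   permutations of rank z and rank z+1. Hence E[1{p increasing on A} e_i] is
   1/k! when A contains both i and i+m, it is
   (#{a in A | a > i} - #{a in A | a < i})/(k+1)! when A contains i but not i+m,
   symmetrically (#{a in A | a < i+m} - #{a in A | a > i+m})/(k+1)! when A
   contains i+m but not i, and 0 otherwise. Summing over A, a position b
   contributes 2 C(n-3,k-2) to the middle terms if i < b < i+m and nothing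
   otherwise, so Cov(X, Y) = m (2 C(n-3,k-2) (m-1) + (k+1) C(n-2,k-2)) / (k+1)!,
   which is of order n^k. *)

Section SumFacts.
Local Open Scope ring_scope.

Lemma sumr_eq0_lmul_opp (gT : finGroupType) (R : numDomainType) (h : gT) (f : gT -> R) :
  (forall g, f (h * g)%g = - f g) -> \sum_g f g = 0.
Proof.
move=> fN; set S := \sum_g f g.
have SN : S = - S.
  by rewrite {1}/S (reindex_inj (mulgI h)) /= -sumrN; apply: eq_bigr => g _.
by apply/eqP; have := mulrn_eq0 S 2; rewrite mulr2n {2}SN subrr eqxx => /esym.
Qed.

Lemma cauchy_schwarz (R : realDomainType) (T : finType) (a b : T -> R) :
  (\sum_x a x * b x) ^+ 2 <= (\sum_x a x ^+ 2) * (\sum_x b x ^+ 2).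
Proof.
set Saa := \sum_x a x ^+ 2; set Sab := \sum_x a x * b x; set Sbb := \sum_x b x ^+ 2.
have [Sbb0 | Sbb_gt0] := eqVneq Sbb 0.
  have b0 x : b x = 0.
    apply/eqP; rewrite -sqrf_eq0; apply/eqP.
    by apply: (psumr_eq0P _ Sbb0) => // y _; apply: sqr_ge0.
  by rewrite /Sab big1 ?expr0n ?mulr_ge0 ?sumr_ge0 // => x _; rewrite ?b0 ?mulr0 ?sqr_ge0.
have {}Sbb_gt0 : 0 < Sbb by rewrite lt0r Sbb_gt0 sumr_ge0 // => x _; apply: sqr_ge0.
have : 0 <= Sbb * (Sbb * Saa - Sab ^+ 2).
  have -> : Sbb * (Sbb * Saa - Sab ^+ 2) = \sum_x (Sbb * a x - Sab * b x) ^+ 2.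
    rewrite (eq_bigr (fun x => Sbb ^+ 2 * a x ^+ 2 - 2 * Sbb * Sab * (a x * b x)
                                + Sab ^+ 2 * b x ^+ 2)); last by move=> x _; ring.
    by rewrite big_split sumrB /= -!mulr_sumr -/Saa -/Sab -/Sbb; ring.
  by apply: sumr_ge0 => x _; apply: sqr_ge0.
by rewrite pmulr_rge0 // subr_ge0 mulrC.
Qed.

End SumFacts.

Lemma sum_nat_eq_ltn (x j : nat) : \sum_(z < j) (x == z) = (x < j).
Proof.
elim: j => [|j IHj]; first by rewrite big_ord0.
by rewrite big_ord_recr /= IHj ltnS [(x <= j)]leq_eqVlt; case: ltngtP.
Qed.

Lemma sum_ord_between n a b : a <= b <= n -> \sum_(c < n) (a <= c < b) = b - a.
Proof.
case/andP=> ab bn; rewrite -(big_mkord xpredT (fun c => (a <= c < b) : nat)).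
rewrite (big_cat_nat (leq0n a) (leq_trans ab bn)) (big_cat_nat ab bn) /=.
rewrite big_nat_cond big1 ?add0n => [|c /andP[/andP[_ ca] _]]; last by rewrite leqNgt ca.
rewrite [X in _ + X]big_nat_cond [X in _ + X]big1 ?addn0 => [|c /andP[/andP[bc _] _]].
  rewrite big_nat_cond (eq_bigr (fun _ => 1)) => [|c /andP[/andP[-> ->]]] //.
  by rewrite -big_nat_cond sum_nat_const_nat muln1.
by rewrite ltnNge bc andbF.
Qed.

Lemma card_sets_between (T : finType) (P Q : {set T}) k :
  [disjoint P & Q] -> (#|P| <= k) ->
  #|[set A : {set T} | (#|A| == k) && (P \subset A) && [disjoint A & Q]]|
    = 'C(#|T| - #|P| - #|Q|, k - #|P|).
Proof.
move=> PQ Pk; set D := ~: (P :|: Q).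
have PQ0 : P :&: Q = set0 by apply/eqP; rewrite setI_eq0.
have cardD : #|D| = (#|T| - #|P| - #|Q|).
  by rewrite -(cardsC (P :|: Q)) -/D cardsU PQ0 cards0 subn0; lia.
have DP (B : {set T}) : B \subset D -> [disjoint B & P].
  by move=> BD; rewrite disjoints_subset (subset_trans BD) // setCS subsetUl.
have DQ (B : {set T}) : B \subset D -> [disjoint B & Q].
  by move=> BD; rewrite disjoints_subset (subset_trans BD) // setCS subsetUr.
rewrite -cardD -cards_draws.
set Dk := [set B : {set T} | (B \subset D) && (#|B| == k - #|P|)].
have addP_inj : {in Dk &, injective (fun B => B :|: P)}.
  have addPK (B : {set T}) : B \subset D -> (B :|: P) :\: P = B.
    by move=> /DP /setDidPl BP; rewrite setDUl setDv setU0.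
  move=> B1 B2; rewrite !inE => /andP[B1D _] /andP[B2D _] E.
  by rewrite -(addPK _ B1D) E addPK.
rewrite -(card_in_imset addP_inj); apply: eq_card => A; rewrite !inE.
apply/andP/imsetP => [[/andP[/eqP Ak PA] AQ] | [B]].
  exists (A :\: P); last by rewrite setUC -{1}(setIidPr PA) setID.
  rewrite inE cardsD (setIidPr PA) Ak eqxx andbT.
  apply/subsetP => x; rewrite !inE negb_or => /andP[-> xA] /=.
  by rewrite (disjointFr AQ xA).
rewrite inE => /andP[BD /eqP Bk] ->; split; last first.
  rewrite -setI_eq0 setIUl; move: (DQ B BD); rewrite -setI_eq0 => /eqP ->.
  by rewrite PQ0 setU0.
rewrite subsetUr andbT cardsU.
by move: (DP B BD); rewrite -setI_eq0 => /eqP ->; rewrite cards0 subn0 Bk subnK.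
Qed.

Section IncreasingOn.
Variable n : nat.
Implicit Types (A : {set 'I_n}) (q : 'S_n) (b u : 'I_n).

Definition incr_on A q := [forall i in A, forall j in A, (i < j) ==> (q i < q j)].

Lemma incr_onP A q :
  reflect {in A &, forall i j : 'I_n, (i < j) -> (q i < q j)} (incr_on A q).
Proof.
apply: (iffP forall_inP) => [H i j iA jA ij | H i iA].
  by have /forall_inP/(_ j jA)/implyP := H i iA; apply.
by apply/forall_inP => j jA; apply/implyP; apply: H.
Qed.

Lemma incr_on_tpermD A q x y : x \notin A -> y \notin A ->
  incr_on A (tperm x y * q) = incr_on A q.
Proof.
move=> xA yA; have qE z : z \in A -> (tperm x y * q)%g z = q z.
  by move=> zA; rewrite permM tpermD //; [apply: contraNneq xA | apply: contraNneq yA] => ->.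
by apply/incr_onP/incr_onP => H i j iA jA; have := H i j iA jA; rewrite !qE.
Qed.

Definition nleft A b := #|[set b' in A | (b' < b)]|.
Definition nright A b := #|[set b' in A | (b < b')]|.

Lemma card_nleft_nright A b : b \in A -> #|A| = (nleft A b + nright A b).+1.
Proof.
move=> bA; rewrite (cardD1 b) bA add1n /nleft /nright -cardsUI; congr _.+1.
have -> : [set b' in A | (b' < b)] :&: [set b' in A | (b < b')] = set0.
  by apply/setP => x; rewrite !inE; case: (x \in A) => //; case: ltngtP.
rewrite cards0 addn0; apply: eq_card => x; rewrite !inE.
by case: (x \in A); rewrite /= ?andbT ?andbF // -val_eqE neq_ltn.
Qed.

Lemma nleft_lt_card A b : b \in A -> (nleft A b < #|A|).
Proof. by move=> bA; rewrite (card_nleft_nright bA) ltnS leq_addr. Qed.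

Lemma nleftS A b : b \in A -> #|[set b' in A | (b' <= b)]| = (nleft A b).+1.
Proof.
move=> bA; have -> : [set b' in A | (b' <= b)] = b |: [set b' in A | (b' < b)].
  apply/setP => x; rewrite !inE leq_eqVlt -val_eqE.
  by case: ltngtP => [||/val_inj ->]; rewrite ?bA ?andbF.
by rewrite (@cardsU1 _ b) inE ltnn andbF.
Qed.

Lemma nleft_mono A b b' : b \in A -> b' \in A -> (b' < b) -> (nleft A b' < nleft A b).
Proof.
move=> bA b'A b'b; rewrite -nleftS //; apply: subset_leq_card; apply/subsetP => x.
by rewrite !inE => /andP[-> xb'] /=; apply: leq_ltn_trans xb' b'b.
Qed.

Section OutsidePoint.
Variables (A : {set 'I_n}) (u : 'I_n).
Hypothesis uA : u \notin A.

Definition nbelow q := #|[set b in A | (q b < q u)]|.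

Lemma nbelow_le_card q : (nbelow q <= #|A|).
Proof. by apply: subset_leq_card; apply/subsetP => x; rewrite inE => /andP[]. Qed.

Lemma neq_outside b : b \in A -> b != u.
Proof. by move=> bA; apply: contraNneq uA => <-. Qed.

Lemma ltn_perm_outside b q : b \in A -> (q u < q b) = ~~ (q b < q u).
Proof.
move=> bA; have : val (q b) != val (q u).
  by apply: contra (neq_outside bA) => /eqP/val_inj/perm_inj ->.
by rewrite neq_ltn => /orP[] lt; rewrite lt ?(ltn_geF (ltnW lt)) // ltnNge ltnW.
Qed.

Lemma ltn_outside_nbelow b q : b \in A -> incr_on A q ->
  (q u < q b) = (nbelow q <= nleft A b).
Proof.
move=> bA /incr_onP qA; apply/idP/idP => [ub | ].
  apply: subset_leq_card; apply/subsetP => x; rewrite !inE => /andP[xA xu].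
  rewrite xA ltnNge leq_eqVlt; apply/negP => /orP[/eqP/val_inj bx | bx].
    by move: xu; rewrite -bx ltnNge (ltnW ub).
  by have := ltn_trans (ltn_trans ub (qA _ _ bA xA bx)) xu; rewrite ltnn.
rewrite ltn_perm_outside //; apply: contraL => bu; rewrite -ltnNge -nleftS //.
apply: subset_leq_card; apply/subsetP => x; rewrite !inE => /andP[xA].
rewrite xA leq_eqVlt => /orP[/eqP/val_inj -> // | xb].
exact: ltn_trans (qA _ _ xA bA xb) bu.
Qed.

Definition u_just_below b q := [&& incr_on A q, (q u < q b) &
  [forall b' in A, (b' < b) ==> (q b' < q u)]].
Definition u_just_above b q := [&& incr_on A q, (q b < q u) &
  [forall b' in A, (b < b') ==> (q u < q b')]].

Lemma u_just_belowE b q : b \in A ->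
  u_just_below b q = incr_on A q && (nbelow q == nleft A b).
Proof.
move=> bA; rewrite /u_just_below; case qA: (incr_on A q) => //=.
rewrite (ltn_outside_nbelow bA qA) eqn_leq.
apply/andP/andP => [[le /forall_inP left_below] | [le ge]]; split => //.
  apply: subset_leq_card; apply/subsetP => x; rewrite !inE => /andP[xA xb].
  by rewrite xA; apply: (implyP (left_below x xA)).
apply/forall_inP => x xA; apply/implyP => xb.
rewrite -[(_ < _)]negbK -ltn_perm_outside // (ltn_outside_nbelow xA qA) -ltnNge.
exact: leq_trans (nleft_mono bA xA xb) ge.
Qed.

Lemma u_just_aboveE b q : b \in A ->
  u_just_above b q = incr_on A q && (nbelow q == (nleft A b).+1).
Proof.
move=> bA; rewrite /u_just_above; case qA: (incr_on A q) => //=.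
rewrite -[(_ < _)]negbK -ltn_perm_outside // (ltn_outside_nbelow bA qA) -ltnNge.
rewrite eqn_leq [RHS]andbC.
apply/andP/andP => [[lt /forall_inP right_above] | [lt le]]; split => //.
  rewrite -nleftS //; apply: subset_leq_card; apply/subsetP => x.
  rewrite !inE => /andP[xA xu]; rewrite xA leqNgt; apply/negP => bx.
  by have := ltn_trans xu (implyP (right_above x xA) bx); rewrite ltnn.
apply/forall_inP => x xA; apply/implyP => bx.
rewrite (ltn_outside_nbelow xA qA) leqNgt; apply/negP => xu.
by have := leq_trans (nleft_mono xA bA bx) (leq_trans xu le); rewrite ltnn.
Qed.

Lemma u_just_above_tperm b q : b \in A ->
  u_just_above b (tperm u b * q) = u_just_below b q.
Proof.
move=> bA; set q' := (tperm u b * q)%g.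
have q'b : q' b = q u by rewrite permM tpermR.
have q'u : q' u = q b by rewrite permM tpermL.
have q'E x : x \in A -> x != b -> q' x = q x.
  by move=> xA xb; rewrite permM tpermD // eq_sym ?neq_outside.
have neq_of_lt x : (b < x) || (x < b) -> x != b.
  by move=> lt; apply: contraTneq lt => ->; rewrite ltnn.
rewrite /u_just_above /u_just_below q'b q'u.
apply/and3P/and3P => [[/incr_onP q'A ub /forall_inP right_above] |
                      [/incr_onP qA ub /forall_inP left_below]]; split => //.
- have qb_lt x : x \in A -> (b < x) -> (q b < q x).
    by move=> xA bx; rewrite -(q'E x) ?neq_of_lt ?bx //; apply: (implyP (right_above x xA)).
  apply/incr_onP => i j iA jA ij.
  have [ib | ib] := eqVneq i b; first by subst i; apply: qb_lt.
  have [jb | jb] := eqVneq j b; last by rewrite -(q'E i) // -(q'E j) // q'A.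
  by subst j; rewrite -(q'E i) // (ltn_trans _ ub) // -q'b q'A.
- apply/forall_inP => x xA; apply/implyP => xb.
  by rewrite -q'b -(q'E x) ?neq_of_lt ?xb ?orbT // q'A.
- apply/incr_onP => i j iA jA ij.
  have [ib | ib] := eqVneq i b.
    by subst i; rewrite q'b q'E ?neq_of_lt ?ij // (ltn_trans ub) // qA.
  have [jb | jb] := eqVneq j b; last by rewrite !q'E // qA.
  by subst j; rewrite q'b q'E //; apply: (implyP (left_below i iA)).
- by apply/forall_inP => x xA; apply/implyP => bx; rewrite q'E ?neq_of_lt ?bx // qA.
Qed.

Definition nrank z := \sum_q (incr_on A q && (nbelow q == z)).

Lemma nrank_nleftS b : b \in A -> nrank (nleft A b) = nrank (nleft A b).+1.
Proof.
move=> bA; rewrite /nrank [RHS](reindex_inj (mulgI (tperm u b))) /=.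
apply: eq_bigr => q _.
by rewrite -(u_just_belowE q bA) -u_just_aboveE // u_just_above_tperm.
Qed.

Lemma nleft_onto z : (z < #|A|) -> exists2 b, b \in A & nleft A b = z.
Proof.
move=> zA; set s := [seq nleft A b | b <- enum A].
have s_uniq : uniq s.
  rewrite /s map_inj_in_uniq ?enum_uniq // => x y; rewrite !mem_enum => xA yA.
  move=> eq_nleft; apply: val_inj; case: (ltngtP x y) => // [xy | yx].
    by move: (nleft_mono yA xA xy); rewrite eq_nleft ltnn.
  by move: (nleft_mono xA yA yx); rewrite eq_nleft ltnn.
have s_sub : {subset s <= iota 0 #|A|}.
  by move=> x /mapP[b]; rewrite mem_enum mem_iota => bA ->; apply: nleft_lt_card.
have s_size : (size (iota 0 #|A|) <= size s) by rewrite size_map size_iota -cardE.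
have [_ s_eq] := uniq_min_size s_uniq s_sub s_size.
have : z \in iota 0 #|A| by rewrite mem_iota.
by rewrite -s_eq => /mapP[b]; rewrite mem_enum => bA ->; exists b.
Qed.

Lemma nrank_const z : (z <= #|A|) -> nrank z = nrank 0.
Proof.
elim: z => // z IHz zA; have [b bA bz] := nleft_onto zA.
by rewrite -bz -nrank_nleftS // bz IHz // ltnW.
Qed.

Lemma count_nbelow_leq j : (j <= #|A|) ->
  \sum_q (incr_on A q && (nbelow q <= j)) = j.+1 * nrank 0.
Proof.
move=> jA; transitivity (\sum_(z < j.+1) nrank z); last first.
  rewrite (eq_bigr (fun _ => nrank 0)) ?sum_nat_const ?card_ord // => z _.
  by apply: nrank_const; rewrite (leq_trans _ jA) // -ltnS.
rewrite /nrank exchange_big /=; apply: eq_bigr => q _.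
by case: (incr_on A q) => /=; [rewrite sum_nat_eq_ltn | rewrite big1].
Qed.

Lemma count_incr_on : \sum_q incr_on A q = #|A|.+1 * nrank 0.
Proof.
rewrite -count_nbelow_leq //; apply: eq_bigr => q _.
by rewrite nbelow_le_card andbT.
Qed.

Lemma count_incr_outside_lt b : b \in A ->
  \sum_q (incr_on A q && (q u < q b)) = (nleft A b).+1 * nrank 0.
Proof.
move=> bA; rewrite -count_nbelow_leq ?(ltnW (nleft_lt_card bA)) //.
by apply: eq_bigr => q _; case qA: (incr_on A q); rewrite //= ltn_outside_nbelow.
Qed.

Lemma count_incr_lt_outside b : b \in A ->
  \sum_q (incr_on A q && (q b < q u)) = (nright A b).+1 * nrank 0.
Proof.
move=> bA; apply/eqP; rewrite -(eqn_add2l ((nleft A b).+1 * nrank 0)).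
rewrite -{1}(count_incr_outside_lt bA) -big_split /= -mulnDl.
rewrite (eq_bigr (fun q => nat_of_bool (incr_on A q))) => [|q _].
  by rewrite count_incr_on (card_nleft_nright bA) addSn addnS.
by rewrite (ltn_perm_outside q bA); case: (incr_on A q); case: (q b < q u).
Qed.

End OutsidePoint.

Lemma nbelow_eq_card A u q :
  (nbelow A u q == #|A|) = [forall b in A, (q b < q u)].
Proof.
apply/eqP/forall_inP => [nbelowA b bA | all_below]; last first.
  by apply: eq_card => x; rewrite inE; case: (boolP (x \in A)) => // /all_below.
have : [set b in A | (q b < q u)] \subset A by apply/subsetP => x; rewrite inE => /andP[].
by move=> /(subset_cardP nbelowA)/(_ b); rewrite inE bA => /andP[].
Qed.

Lemma incr_on_setD1_max A u q : u \in A -> {in A, forall b, (b <= u)} ->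
  incr_on A q = incr_on (A :\ u) q && (nbelow (A :\ u) u q == #|A :\ u|).
Proof.
move=> uA u_max; rewrite nbelow_eq_card.
apply/incr_onP/andP => [qA | [/incr_onP qA' /forall_inP below_u]].
  split; first by apply/incr_onP => i j /setD1P[_ iA] /setD1P[_ jA]; apply: qA.
  apply/forall_inP => b /setD1P[bu bA]; apply: qA => //.
  by rewrite ltn_neqAle u_max // andbT.
move=> i j iA jA ij.
have [ju | ju] := eqVneq j u.
  by subst j; apply: below_u; rewrite !inE iA andbT; apply: contraTneq ij => ->; rewrite ltnn.
have [iu | iu] := eqVneq i u; first by subst i; move: (u_max j jA); rewrite leqNgt ij.
by apply: qA' => //; rewrite !inE ?iA ?jA ?iu ?ju.
Qed.

Lemma count_incr_on_fact A : (\sum_q incr_on A q) * #|A|`! = n`!.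
Proof.
move cardA : #|A| => k; elim: k A cardA => [|k IHk] A cardA.
  rewrite muln1 -card_Sn -sum1_card; apply: eq_bigr => q _.
  by apply/eqP; rewrite eqb1; apply/incr_onP => i j; rewrite (cards0_eq cardA) inE.
have [x0 x0A] : {x0 | x0 \in A} by apply/sigW/set0Pn; rewrite -cards_eq0 cardA.
have [u uA u_max] := @arg_maxnP _ x0 (mem A) val x0A.
have {}uA : u \in A by [].
have uA' : u \notin A :\ u by rewrite !inE eqxx.
have cardA' : #|A :\ u| = k by move: (cardsD1 u A); rewrite uA cardA add1n => -[].
have -> : \sum_q incr_on A q = nrank (A :\ u) u #|A :\ u|.
  by apply: eq_bigr => q _; rewrite (incr_on_setD1_max q uA u_max).
rewrite nrank_const // factS mulnA mulnAC -cardA' -(IHk _ cardA').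
by rewrite (count_incr_on uA') cardA'; ring.
Qed.

Lemma nrank0_fact A u : u \notin A -> nrank A u 0 * (#|A|.+1)`! = n`!.
Proof.
by move=> uA; rewrite -(count_incr_on_fact A) (count_incr_on uA) factS; ring.
Qed.

End IncreasingOn.

Section Halves.
Variable n : nat.
Local Notation m := n./2.

Lemma half_add_half_le : (m + m <= n).
Proof. by rewrite addnn -{2}(odd_double_half n) leq_addl. Qed.

Lemma half_le : (m <= n).
Proof. exact: leq_trans (leq_addr m m) half_add_half_le. Qed.

Lemma add_half_lt (i : 'I_m) : (i + m < n).
Proof. by rewrite (leq_trans _ half_add_half_le) // ltn_add2r. Qed.

Definition lft (i : 'I_m) : 'I_n := widen_ord half_le i.
Definition rgt (i : 'I_m) : 'I_n := Ordinal (add_half_lt i).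

Lemma lft_lt_rgt (i : 'I_m) : (lft i < rgt i).
Proof. by rewrite /=; move: (ltn_ord i); lia. Qed.

Lemma lft_neq_rgt (i j : 'I_m) : lft i != rgt j.
Proof.
by apply/eqP => /(congr1 val) /=; move: (ltn_ord i); lia.
Qed.

Local Open Scope ring_scope.

Definition pair_sign i (q : 'S_n) : rat := if (q (lft i) < q (rgt i))%N then 1 else -1.
Definition pair_signs (q : 'S_n) : rat := \sum_(i < m) pair_sign i q.

Lemma pair_sign_tperm i q : pair_sign i (tperm (lft i) (rgt i) * q) = - pair_sign i q.
Proof.
rewrite /pair_sign !permM tpermL tpermR.
have : val (q (lft i)) != val (q (rgt i)).
  by apply: contra (lft_neq_rgt i i) => /eqP/val_inj/perm_inj ->.
by rewrite neq_ltn => /orP[] lt; rewrite lt ?opprK // ltnNge ltnW.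
Qed.

Lemma pair_sign_tpermD i j q : i != j ->
  pair_sign j (tperm (lft i) (rgt i) * q) = pair_sign j q.
Proof.
move=> ij; rewrite /pair_sign !permM !tpermD //.
all: apply/eqP => /(congr1 val) /=; move: ij (ltn_ord i) (ltn_ord j); rewrite -val_eqE /=; lia.
Qed.

Lemma sum_pair_sign_mul i j :
  \sum_(q : 'S_n) pair_sign i q * pair_sign j q = (i == j)%:R * (n`!)%:R.
Proof.
have [<- | ij] := eqVneq i j.
  rewrite mul1r -card_Sn -sumr_const; apply: eq_bigr => q _.
  by rewrite /pair_sign; case: ifP; rewrite ?mulr1 ?mulrNN ?mulr1.
rewrite mul0r; apply: (sumr_eq0_lmul_opp (h := tperm (lft i) (rgt i))
  (f := fun q => pair_sign i q * pair_sign j q)) => q.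
by rewrite pair_sign_tperm pair_sign_tpermD // mulNr.
Qed.

Lemma sum_pair_signs : \sum_(q : 'S_n) pair_signs q = 0.
Proof.
rewrite exchange_big big1 //= => i _.
exact: (sumr_eq0_lmul_opp (h := tperm (lft i) (rgt i)) (pair_sign_tperm i)).
Qed.

Lemma sum_pair_signs_sqr : \sum_(q : 'S_n) pair_signs q ^+ 2 = m%:R * (n`!)%:R.
Proof.
rewrite (eq_bigr (fun q => \sum_i \sum_j pair_sign i q * pair_sign j q)) => [|q _]; last first.
  by rewrite expr2 mulr_suml; apply: eq_bigr => i _; rewrite mulr_sumr.
rewrite exchange_big (eq_bigr (fun _ => (n`!)%:R)) => [|i _] /=.
  by rewrite sumr_const card_ord mulr_natl.
rewrite exchange_big (bigD1 i) //= sum_pair_sign_mul eqxx mul1r big1 ?addr0 // => j ji.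
by rewrite sum_pair_sign_mul eq_sym (negbTE ji) mul0r.
Qed.

End Halves.

Definition cov_count n k :=
  n./2 * (2 * 'C(n - 3, k - 2) * (n./2).-1 + k.+1 * 'C(n - 2, k - 2)).

Section PairSignCorrelation.
Variable n : nat.
Local Notation m := n./2.
Local Open Scope ring_scope.
Implicit Types (A : {set 'I_n}) (i : 'I_m).

Lemma sum_incr_on_sign A (c : pred 'S_n) :
  \sum_(q : 'S_n) (incr_on A q)%:R * (if c q then 1 else -1 : rat) =
  (\sum_q (incr_on A q && c q))%N%:R - (\sum_q (incr_on A q && ~~ c q))%N%:R.
Proof.
rewrite !natr_sum -sumrB; apply: eq_bigr => q _.
by case: (incr_on A q); case: (c q); rewrite ?mulr1 ?mulrN1 ?subr0 ?sub0r ?mul0r ?subrr.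
Qed.

Lemma sum_incr_pair_sign_out A i : lft i \notin A -> rgt i \notin A ->
  \sum_(q : 'S_n) (incr_on A q)%:R * pair_sign i q = 0.
Proof.
move=> lA rA; apply: (sumr_eq0_lmul_opp (h := tperm (lft i) (rgt i))
  (f := fun q => (incr_on A q)%:R * pair_sign i q)) => q.
by rewrite pair_sign_tperm incr_on_tpermD // mulrN.
Qed.

Lemma sum_incr_pair_sign_in A i : lft i \in A -> rgt i \in A ->
  \sum_(q : 'S_n) (incr_on A q)%:R * pair_sign i q = (\sum_q incr_on A q)%N%:R.
Proof.
move=> lA rA; rewrite natr_sum; apply: eq_bigr => q _.
case qA: (incr_on A q); rewrite ?mul0r //= mul1r /pair_sign.
by move/incr_onP: qA => ->//; apply: lft_lt_rgt.
Qed.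

Lemma sum_incr_pair_sign_lft A i : lft i \in A -> rgt i \notin A ->
  \sum_(q : 'S_n) (incr_on A q)%:R * pair_sign i q =
  ((nright A (lft i))%:R - (nleft A (lft i))%:R) * (nrank A (rgt i) 0)%:R.
Proof.
move=> lA rA; rewrite sum_incr_on_sign (count_incr_lt_outside rA lA).
under eq_bigr => q _ do rewrite -(ltn_perm_outside rA q lA).
by rewrite (count_incr_outside_lt rA lA) !natrM -mulrBl !mulrSr; congr (_ * _); lra.
Qed.

Lemma sum_incr_pair_sign_rgt A i : rgt i \in A -> lft i \notin A ->
  \sum_(q : 'S_n) (incr_on A q)%:R * pair_sign i q =
  ((nleft A (rgt i))%:R - (nright A (rgt i))%:R) * (nrank A (lft i) 0)%:R.
Proof.
move=> rA lA; rewrite sum_incr_on_sign (count_incr_outside_lt lA rA).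
under eq_bigr => q _ do rewrite (ltn_perm_outside lA q rA) negbK.
by rewrite (count_incr_lt_outside lA rA) !natrM -mulrBl !mulrSr; congr (_ * _); lra.
Qed.

Variable k : nat.
Let rho : rat := (n`!)%:R / ((k.+1)`!)%:R.

Lemma nrank0E A u : u \notin A -> #|A| = k -> (nrank A u 0)%:R = rho.
Proof.
move=> uA cardA; rewrite /rho -(nrank0_fact uA) cardA natrM mulfK //.
by rewrite pnatr_eq0 -lt0n fact_gt0.
Qed.

Lemma count_incr_onE A : #|A| = k -> (\sum_q incr_on A q)%N%:R = k.+1%:R * rho.
Proof.
move=> cardA; rewrite /rho -(count_incr_on_fact A) cardA factS !natrM.
by field; rewrite pnatr_eq0 -lt0n fact_gt0 addrC natr1 pnatr_eq0.
Qed.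

Definition ltn_sign (x y : 'I_n) : rat := (x < y)%N%:R - (y < x)%N%:R.

Lemma nright_sub_nleft A b :
  (nright A b)%:R - (nleft A b)%:R = \sum_(c : 'I_n) (c \in A)%:R * ltn_sign b c.
Proof.
rewrite /nright /nleft -!sum1_card !natr_sum.
rewrite [X in X - _]big_mkcond [X in _ - X]big_mkcond -sumrB /=.
apply: eq_bigr => c _; rewrite !inE /ltn_sign.
by case: (c \in A); case: (ltngtP b c); rewrite /= ?mul1r ?mul0r ?subrr ?subr0 ?sub0r.
Qed.

Lemma nleft_sub_nright A b :
  (nleft A b)%:R - (nright A b)%:R = \sum_(c : 'I_n) (c \in A)%:R * ltn_sign c b.
Proof.
rewrite -opprB nright_sub_nleft -sumrN; apply: eq_bigr => c _.
by rewrite /ltn_sign -mulrN opprB.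
Qed.

Definition cov_weight i A : rat :=
  \sum_(b : 'I_n) ([&& lft i \in A, rgt i \notin A & b \in A]%:R * ltn_sign (lft i) b
                 + [&& rgt i \in A, lft i \notin A & b \in A]%:R * ltn_sign b (rgt i))
  + [&& lft i \in A & rgt i \in A]%:R * k.+1%:R.

Lemma sum_incr_pair_sign A i : #|A| = k ->
  \sum_(q : 'S_n) (incr_on A q)%:R * pair_sign i q = cov_weight i A * rho.
Proof.
move=> cardA; rewrite /cov_weight.
case lA: (lft i \in A); case rA: (rgt i \in A); rewrite /= ?mulr0n ?mulr1n ?mul0r ?mul1r.
- rewrite [\sum_(b < n) _]big1 => [|b _]; last by rewrite !mul0r addr0.
  by rewrite add0r sum_incr_pair_sign_in // count_incr_onE.
- rewrite addr0 (sum_incr_pair_sign_lft lA (negbT rA)) (nrank0E (negbT rA) cardA).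
  by rewrite nright_sub_nleft; congr (_ * _); apply: eq_bigr => b _; rewrite mul0r addr0.
- rewrite addr0 (sum_incr_pair_sign_rgt rA (negbT lA)) (nrank0E (negbT lA) cardA).
  by rewrite nleft_sub_nright; congr (_ * _); apply: eq_bigr => b _; rewrite mul0r add0r.
- rewrite sum_incr_pair_sign_out ?lA ?rA // [\sum_(b < n) _]big1 => [|b _].
    by rewrite addr0 mul0r.
  by rewrite !mul0r addr0.
Qed.

Hypothesis k_ge2 : (2 <= k)%N.

Lemma sum_bool_card (P b : pred {set 'I_n}) :
  \sum_(A | P A) (b A)%:R = #|[set A | P A && b A]|%:R :> rat.
Proof.
rewrite -sum1_card natr_sum [RHS](eq_bigl (fun A => P A && b A)) => [|A]; last by rewrite inE.
by rewrite big_mkcondr /=; apply: eq_bigr => A _; case: (b A).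
Qed.

Lemma sum_mem_notin_mem (x y z : 'I_n) : x != y -> x != z -> y != z ->
  \sum_(A : {set 'I_n} | #|A| == k) [&& x \in A, z \notin A & y \in A]%:R
    = 'C(n - 3, k - 2)%:R :> rat.
Proof.
move=> xy xz yz; rewrite sum_bool_card.
have xyz : [disjoint [set x; y] & [set z]].
  by rewrite disjoint_sym disjoints1 !inE negb_or ![z == _]eq_sym xz yz.
have := card_sets_between xyz; rewrite cards2 xy cards1 card_ord -subnDA => /(_ k k_ge2) <-.
congr _%:R; apply: eq_card => A; rewrite !inE subUset !sub1set disjoint_sym disjoints1.
by case: (x \in A); case: (y \in A); case: (z \in A); rewrite /= ?andbF ?andbT.
Qed.

Lemma sum_mem_mem (x y : 'I_n) : x != y ->
  \sum_(A : {set 'I_n} | #|A| == k) [&& x \in A & y \in A]%:R = 'C(n - 2, k - 2)%:R :> rat.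
Proof.
move=> xy; rewrite sum_bool_card.
have xy0 : [disjoint [set x; y] & set0] by rewrite -setI_eq0 setI0.
have := card_sets_between xy0; rewrite cards2 xy cards0 card_ord subn0 => /(_ k k_ge2) <-.
congr _%:R; apply: eq_card => A; rewrite !inE subUset !sub1set.
by rewrite (_ : [disjoint A & set0]) ?andbT // -setI_eq0 setI0.
Qed.

Lemma sum_cov_weight_at i b :
  \sum_(A : {set 'I_n} | #|A| == k)
     ([&& lft i \in A, rgt i \notin A & b \in A]%:R * ltn_sign (lft i) b
    + [&& rgt i \in A, lft i \notin A & b \in A]%:R * ltn_sign b (rgt i))
  = (2 * 'C(n - 3, k - 2))%:R * (lft i < b < rgt i)%N%:R.
Proof.
set l := lft i; set r := rgt i; have lr : (l < r)%N := lft_lt_rgt i.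
have [-> | bl] := eqVneq b l.
  rewrite ltnn mulr0 big1 // => A _.
  by rewrite /ltn_sign ltnn subrr mulr0 add0r; case: (l \in A); rewrite ?andbF ?mul0r.
have [-> | br] := eqVneq b r.
  rewrite ltnn andbF mulr0 big1 // => A _.
  by rewrite /ltn_sign ltnn subrr mulr0 addr0; case: (r \in A); rewrite ?andbF ?mul0r.
rewrite big_split /= -!mulr_suml.
have lb : l != b by rewrite eq_sym.
have rb : r != b by rewrite eq_sym.
have lr' : l != r := lft_neq_rgt i i.
have rl : r != l by rewrite eq_sym.
rewrite (sum_mem_notin_mem lb lr' br) (sum_mem_notin_mem rb rl bl).
rewrite -mulrDr natrM (mulrC 2%:R) -mulrA; congr (_ * _).
move: bl br; rewrite /ltn_sign -!val_eqE /=.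
case: (ltngtP l b) => lb' //; case: (ltngtP b r) => br' //= _ _; try lra.
by move: lr lb' br'; lia.
Qed.

Lemma sum_cov_weight i : \sum_(A : {set 'I_n} | #|A| == k) cov_weight i A
  = (2 * 'C(n - 3, k - 2) * m.-1 + k.+1 * 'C(n - 2, k - 2))%:R.
Proof.
rewrite /cov_weight big_split /= -mulr_suml sum_mem_mem ?lft_neq_rgt // exchange_big /=.
under eq_bigr => b _ do rewrite sum_cov_weight_at.
rewrite -mulr_sumr -natr_sum sum_ord_between; last by rewrite lft_lt_rgt ltnW.
rewrite /= -!natrM -natrD.
have -> : (i + m - i.+1 = m.-1)%N by move: (ltn_ord i); lia.
by congr _%:R; ring.
Qed.

Lemma Xn_sum_incr_on q : Xn k q = \sum_(A : {set 'I_n} | #|A| == k) (incr_on A q)%:R.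
Proof. by rewrite sum_bool_card. Qed.

Lemma sum_Xn_pair_signs :
  \sum_(q : 'S_n) Xn k q * pair_signs q = (cov_count n k)%:R * rho.
Proof.
transitivity (\sum_(q : 'S_n) \sum_(i < m) \sum_(A : {set 'I_n} | #|A| == k)
                (incr_on A q)%:R * pair_sign i q).
  apply: eq_bigr => q _; rewrite Xn_sum_incr_on /pair_signs mulr_sumr.
  by apply: eq_bigr => i _; rewrite mulr_suml.
rewrite exchange_big /=; under eq_bigr => i _ do rewrite exchange_big /=.
rewrite (eq_bigr (fun=> (2 * 'C(n - 3, k - 2) * m.-1 + k.+1 * 'C(n - 2, k - 2))%:R * rho)).
  by rewrite sumr_const card_ord /cov_count natrM -mulrA [RHS]mulr_natl.
move=> i _; rewrite -(sum_cov_weight i) mulr_suml; apply: eq_bigr => A /eqP cardA.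
exact: sum_incr_pair_sign.
Qed.

Lemma VarX_ge_cov_count : (0 < m)%N ->
  (cov_count n k)%:R ^+ 2 / ((k.+1)`!%:R ^+ 2 * m%:R) <= VarX k n.
Proof.
move=> m_gt0; set mu := Eunif (Xn k (n:=n)).
have nf_gt0 : 0 < (n`!)%:R :> rat by rewrite ltr0n fact_gt0.
have cov_eq : \sum_(q : 'S_n) (Xn k q - mu) * pair_signs q = (cov_count n k)%:R * rho.
  under eq_bigr => q _ do rewrite mulrBl.
  by rewrite sumrB -mulr_sumr sum_pair_signs mulr0 subr0 sum_Xn_pair_signs.
have := cauchy_schwarz (fun q => Xn k q - mu) (@pair_signs n).
rewrite cov_eq sum_pair_signs_sqr /VarX /Eunif -/mu.
set S := \sum_q _ => CS.
have m_pos : 0 < m%:R :> rat by rewrite ltr0n.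
rewrite (_ : _ / _ = ((cov_count n k)%:R * rho) ^+ 2 / (m%:R * (n`!)%:R) / (n`!)%:R).
  by rewrite ler_pM2r ?invr_gt0 // ler_pdivrMr ?mulr_gt0.
by rewrite /rho; field; rewrite !gt_eqF ?ltr0n ?fact_gt0.
Qed.

End PairSignCorrelation.

Lemma leq_exp2rW m n e : m <= n -> m ^ e <= n ^ e.
Proof. by move=> mn; elim: e => // e IHe; rewrite !expnS leq_mul. Qed.

Lemma expn_sub_leq_bin a j : (a - j) ^ j <= 'C(a, j) * j`!.
Proof.
rewrite bin_ffact; elim: j a => [|j IHj] a; first by rewrite ffactn0.
rewrite ffactnS expnS leq_mul //; first by rewrite leq_subr.
by apply: leq_trans (IHj a.-1); apply: leq_exp2rW; lia.
Qed.

Lemma fact_leq_expn j : j`! <= j ^ j.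
Proof.
elim: j => // j IHj; rewrite factS expnS leq_mul //.
by apply: leq_trans IHj _; apply: leq_exp2rW.
Qed.

Lemma cov_count_gt0 n k : 2 <= k <= n -> 0 < cov_count n k.
Proof.
case/andP=> k_ge2 kn; have m_gt0 : 0 < n./2 by rewrite half_gt0; lia.
have C_gt0 : 0 < 'C(n - 2, k - 2) by rewrite bin_gt0; lia.
by rewrite /cov_count muln_gt0 m_gt0 (leq_trans _ (leq_addl _ _)) // muln_gt0 C_gt0.
Qed.

Lemma cov_count_small n k : 2 <= k <= n -> n < 4 * k ->
  n ^ k <= (4 * k) ^ k * cov_count n k.
Proof.
move=> kn small; rewrite -[n ^ k]muln1 leq_mul ?cov_count_gt0 //.
by apply: leq_exp2rW; apply: ltnW.
Qed.

Lemma cov_count_large n k : 2 <= k -> 4 * k <= n ->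
  n ^ k <= 8 * (4 * k) ^ k * cov_count n k.
Proof.
move=> k_ge2 large; set m := n./2; set C := 'C(n - 3, k - 2).
have n_le_m : n <= 4 * m.-1.
  by have := odd_double_half n; have := leq_b1 (odd n); rewrite -addnn -/m; lia.
have sqr_le : n ^ 2 <= 16 * (m * m.-1).
  rewrite (_ : 16 * _ = 4 * m * (4 * m.-1)); last by ring.
  by rewrite expnS expn1 leq_mul //; apply: leq_trans n_le_m _; lia.
have pow_le : n ^ (k - 2) <= 2 ^ (k - 2) * (C * (k - 2)`!).
  apply: leq_trans (_ : (2 * (n - 3 - (k - 2))) ^ (k - 2) <= _).
    by apply: leq_exp2rW; lia.
  by rewrite expnMn leq_mul // expn_sub_leq_bin.
have const_le : 2 ^ (k - 2) * (k - 2)`! <= (4 * k) ^ k.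
  apply: leq_trans (leq_mul (leqnn _) (fact_leq_expn _)) _.
  rewrite -expnMn (leq_trans (leq_exp2rW _ (_ : 2 * (k - 2) <= 4 * k))) ?leq_pexp2l //; lia.
rewrite -(subnK k_ge2) expnD subnK //.
apply: leq_trans (leq_mul pow_le sqr_le) _.
rewrite (_ : _ * (16 * _) = 8 * (2 ^ (k - 2) * (k - 2)`!) * (m * (2 * C * m.-1))).
  apply: leq_mul; first by rewrite leq_mul2l const_le orbT.
  by rewrite /cov_count -/m -/C leq_mul2l leq_addr orbT.
by ring.
Qed.

Lemma cov_count_lb n k : 2 <= k <= n -> n ^ k <= 8 * (4 * k) ^ k * cov_count n k.
Proof.
move=> kn; have [small | large] := ltnP n (4 * k); last first.
  by case/andP: kn => k_ge2 _; apply: cov_count_large.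
apply: leq_trans (cov_count_small kn small) _.
by rewrite leq_mul2r (@leq_pmull _ 8) ?orbT.
Qed.

Lemma expn_half_leq_cov_count n k : 2 <= k <= n ->
  n ^ (2 * k - 1) * n./2 <= (8 * (4 * k) ^ k * cov_count n k) ^ 2.
Proof.
move=> kn; have k_gt0 : 0 < k by case/andP: kn => /ltnW.
apply: leq_trans (_ : n ^ (2 * k - 1) * n <= _).
  by rewrite leq_mul2l half_le orbT.
rewrite -expnSr (_ : (2 * k - 1).+1 = k * 2); last by lia.
by rewrite expnM leq_exp2rW // cov_count_lb.
Qed.

Unset Implicit Arguments.

Theorem proposition2p6 (k : nat) (hk : (2 <= k)%N) :
  exists c : rat, (0 < c)%R /\
    forall n : nat, (k <= n)%N -> (c * (n%:R) ^+ (2 * k - 1) <= VarX k n)%R.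
Proof.
set K := (8 * (4 * k) ^ k)%N; set F := (k.+1)`!.
have K_gt0 : (0 < K)%N by rewrite muln_gt0 expn_gt0; lia.
have F_gt0 : (0 < F)%N := fact_gt0 _.
exists (((K * F) ^ 2)%:R^-1)%R; split.
  by rewrite invr_gt0 ltr0n expn_gt0 muln_gt0 K_gt0 F_gt0.
move=> n kn; have kn' : (2 <= k <= n)%N by rewrite hk.
have m_gt0 : (0 < n./2)%N by rewrite half_gt0; lia.
apply: le_trans (VarX_ge_cov_count hk m_gt0).
have := expn_half_leq_cov_count kn'; rewrite -/K -/F.
move: (cov_count n k) => M M_ge; clearbody K F.
have nz (x : nat) : (0 < x)%N -> (x%:R != 0 :> rat)%R by rewrite pnatr_eq0 -lt0n.
rewrite (_ : (_ * _ ^+ _)%R = (n ^ (2 * k - 1) * n./2)%:R / ((K * F) ^ 2 * n./2)%:R)%R.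
  rewrite [X in (_ <= X)%R](_ : _ = ((K * M) ^ 2)%:R / ((K * F) ^ 2 * n./2)%:R)%R.
    rewrite ler_pM2r ?ler_nat // invr_gt0 ltr0n muln_gt0 expn_gt0 muln_gt0.
    by rewrite K_gt0 F_gt0 m_gt0.
  by rewrite !(natrX, natrM); field; rewrite !nz.
by rewrite -natrX !natrM; field; rewrite !nz ?expn_gt0 ?muln_gt0 ?K_gt0 ?F_gt0.
Qed.
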